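(* Under the hypotheses of the preceding setting (f proper lsc with the K\L{} property at $x^*$ with desingularizing $\varphi$ on $\Gamma_\eta(x^*,\delta)$; $(x^k)$ satisfying $\mathbf{H}_1$, $\mathbf{H}_2$, $\mathbf{H}_3$ and $\mathbf{S}(x^*,\delta,\rho)$), we have $x^k\in\underline{\Gamma}_\eta(x^*,\rho)$ for all $k$, and $(x^k)$ converges strongly to some $\bar x$ in the closed ball $\overline{B(x^*,\rho)}$. Moreover $\sum_{k=1}^\infty\|x^{k+1}-x^k\|<\infty$, $\liminf_{k\to\infty}\|\partial f(x^k)\|_-=0$, and $f(\bar x)\le\lim_{k\to\infty}f(x^k)=f(x^* )$.
   Context: $\partial f$ limiting Fréchet subdifferential, lazy slope $\|\partial f(x)\|_-=\inf_{p\in\partial f(x)}\|p\|$ ($+\infty$ if empty). K\L{} inequality on $\Gamma_\eta(x^*,\delta)=\{x:\|x-x^*\|<\delta,\ f(x^* )<f(x)<f(x^* )+\eta\}$: $\varphi'(f(x)-f(x^* ))\|\partial f(x)\|_-\ge1$, $\varphi$ continuous concave on $[0,\eta[$, $\varphi(0)=0$, $C^1$ with $\varphi'>0$ on $]0,\eta[$. $\underline{\Gamma}_\eta(x^*,r)=\{x:\|x-x^*\|<r,\ f(x^* )\le f(x)<f(x^* )+\eta\}$; $\Gamma_\eta(x^*,r)$ likewise with $f(x^* )<f(x)$. $\mathbf{H}_1$: $f(x^{k+1})+a_k\|x^{k+1}-x^k\|^2\le f(x^k)$, $a_k>0$. $\mathbf{H}_2$: $b_{k+1}\|\partial f(x^{k+1})\|_-\le\|x^{k+1}-x^k\|+\varepsilon_{k+1}$,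 $b_{k+1}>0$, $\varepsilon_{k+1}\ge0$. $\mathbf{H}_3$: (i) $a_k\ge\underline a>0$; (ii) $(b_k)\notin\ell^1$; (iii) $M:=\sup_{k\ge1}\frac1{a_kb_k}<\infty$; (iv) $(\varepsilon_k)\in\ell^1$. $\mathbf{S}(x^*,\delta,\rho)$: $\delta>\rho>0$ and (i) for each $k$, if $x^0,\dots,x^k\in\underline{\Gamma}_\eta(x^*,\rho)$ then $x^{k+1}\in\underline{\Gamma}_\eta(x^*,\delta)$; (ii) $x^0\in\Gamma_\eta(x^*,\rho)$ and $\|x^*-x^0\|+2\sqrt{\frac{f(x^0)-f(x^* )}{a_0}}+M\varphi(f(x^0)-f(x^* ))+\sum_{i=1}^\infty\varepsilon_i<\rho$. *)

From Stdlib Require Import Reals Lra Classical ClassicalEpsilon.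
Open Scope R_scope.

Record PreHilbert := mkPreHilbert {
  Hcar :> Type;
  Hadd : Hcar -> Hcar -> Hcar;
  Hscal : R -> Hcar -> Hcar;
  Hzero : Hcar;
  Hinner : Hcar -> Hcar -> R;
  Hadd_assoc : forall x y z, Hadd x (Hadd y z) = Hadd (Hadd x y) z;
  Hadd_comm : forall x y, Hadd x y = Hadd y x;
  Hadd_zero : forall x, Hadd x Hzero = x;
  Hadd_opp : forall x, Hadd x (Hscal (-1) x) = Hzero;
  Hscal_one : forall x, Hscal 1 x = x;
  Hscal_assoc : forall a b x, Hscal a (Hscal b x) = Hscal (a * b) x;
  Hscal_distr_l : forall a x y, Hscal a (Hadd x y) = Hadd (Hscal a x) (Hscal a y);
  Hscal_distr_r : forall a b x, Hscal (a + b) x = Hadd (Hscal a x) (Hscal b x);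
  Hinner_sym : forall x y, Hinner x y = Hinner y x;
  Hinner_add_l : forall x y z, Hinner (Hadd x y) z = Hinner x z + Hinner y z;
  Hinner_scal_l : forall a x y, Hinner (Hscal a x) y = a * Hinner x y;
  Hinner_pos : forall x, 0 <= Hinner x x;
  Hinner_def : forall x, Hinner x x = 0 -> x = Hzero
}.
Arguments Hadd {_}. Arguments Hscal {_}. Arguments Hzero {_}. Arguments Hinner {_}.

Definition Hsub {E : PreHilbert} (x y : E) : E := Hadd x (Hscal (-1) y).
Definition Hnorm {E : PreHilbert} (x : E) : R := sqrt (Hinner x x).

Definition Hcauchy {E : PreHilbert} (u : nat -> E) : Prop :=
  forall eps, 0 < eps -> exists N, forall n m, (n >= N)%nat -> (m >= N)%nat ->
    Hnorm (Hsub (u n) (u m)) < eps.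

Definition Hcv {E : PreHilbert} (u : nat -> E) (l : E) : Prop :=
  forall eps, 0 < eps -> exists N, forall n, (n >= N)%nat -> Hnorm (Hsub (u n) l) < eps.

Definition Hweak_cv {E : PreHilbert} (u : nat -> E) (l : E) : Prop :=
  forall z, Un_cv (fun n => Hinner (u n) z) (Hinner l z).

Record Hilbert := mkHilbert {
  Hpre :> PreHilbert;
  Hcomplete : forall u : nat -> Hpre, Hcauchy u -> exists l, Hcv u l
}.

Inductive ER := Fin (r : R) | PInf.

Definition ER_le (a b : ER) : Prop :=
  match a, b with
  | _, PInf => True
  | PInf, Fin _ => False
  | Fin x, Fin y => x <= y
  end.

Definition ER_addR (a : ER) (c : R) : ER :=
  match a with Fin x => Fin (x + c) | PInf => PInf end.

Definition Rlt_ER (r : R) (e : ER) : Prop :=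
  match e with Fin x => r < x | PInf => True end.

Definition ER_ltR (e : ER) (r : R) : Prop :=
  match e with Fin x => x < r | PInf => False end.

Definition proper {E : PreHilbert} (f : E -> ER) : Prop :=
  exists x r, f x = Fin r.

Definition lsc {E : PreHilbert} (f : E -> ER) : Prop :=
  forall x r, Rlt_ER r (f x) ->
    exists d, 0 < d /\ forall y, Hnorm (Hsub y x) < d -> Rlt_ER r (f y).

Definition frechet_sub {E : PreHilbert} (f : E -> ER) (x p : E) : Prop :=
  exists fx, f x = Fin fx /\
  forall eps, 0 < eps -> exists d, 0 < d /\ forall y, Hnorm (Hsub y x) < d ->
    ER_le (Fin (fx + Hinner p (Hsub y x) - eps * Hnorm (Hsub y x))) (f y).

Definition lim_sub {E : PreHilbert} (f : E -> ER) (x p : E) : Prop :=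
  exists fx, f x = Fin fx /\
  exists (xn pn : nat -> E) (fn : nat -> R),
    Hcv xn x /\ (forall n, f (xn n) = Fin (fn n)) /\ Un_cv fn fx /\
    (forall n, frechet_sub f (xn n) (pn n)) /\ Hweak_cv pn p.

Definition is_inf (S : R -> Prop) (s : R) : Prop :=
  (forall r, S r -> s <= r) /\ (forall t, (forall r, S r -> t <= r) -> t <= s).

(* lazy slope ||df(x)||_- = inf { ||p|| : p in df(x) }, +oo if empty *)
Definition lazy_slope {E : PreHilbert} (f : E -> ER) (x : E) : ER :=
  match excluded_middle_informative (exists p, lim_sub f x p) with
  | left _ => Fin (epsilon (inhabits 0)
                    (is_inf (fun r => exists p, lim_sub f x p /\ r = Hnorm p)))
  | right _ => PInf
  end.

Definition ER_mul_ge1 (c : R) (s : ER) : Prop :=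
  match s with Fin v => 1 <= c * v | PInf => True end.

Definition in_0_eta (t : R) (eta : ER) : Prop := 0 <= t /\ Rlt_ER t eta.

Definition desing (eta : ER) (phi dphi : R -> R) : Prop :=
  phi 0 = 0 /\
  (forall t, in_0_eta t eta -> forall eps, 0 < eps -> exists d, 0 < d /\
     forall s, in_0_eta s eta -> Rabs (s - t) < d -> Rabs (phi s - phi t) < eps) /\
  (forall s t l, in_0_eta s eta -> in_0_eta t eta -> 0 <= l <= 1 ->
     l * phi s + (1 - l) * phi t <= phi (l * s + (1 - l) * t)) /\
  (forall t, 0 < t -> Rlt_ER t eta -> derivable_pt_lim phi t (dphi t)) /\
  (forall t, 0 < t -> Rlt_ER t eta -> continuity_pt dphi t) /\
  (forall t, 0 < t -> Rlt_ER t eta -> 0 < dphi t).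

(* x in Gamma_eta(xstar, r) (strict) / underline Gamma_eta(xstar, r) (non strict),
   where fstar = f(xstar) *)
Definition Gamma {E : PreHilbert} (f : E -> ER) (xstar : E) (fstar : R)
  (eta : ER) (r : R) (x : E) : Prop :=
  Hnorm (Hsub x xstar) < r /\
  exists fx, f x = Fin fx /\ fstar < fx /\ Rlt_ER (fx - fstar) eta.

Definition uGamma {E : PreHilbert} (f : E -> ER) (xstar : E) (fstar : R)
  (eta : ER) (r : R) (x : E) : Prop :=
  Hnorm (Hsub x xstar) < r /\
  exists fx, f x = Fin fx /\ fstar <= fx /\ Rlt_ER (fx - fstar) eta.

Definition KL_at {E : PreHilbert} (f : E -> ER) (xstar : E) (fstar : R)
  (eta : ER) (delta : R) (phi dphi : R -> R) : Prop :=
  0 < delta /\ Rlt_ER 0 eta /\ desing eta phi dphi /\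
  forall x fx, Gamma f xstar fstar eta delta x -> f x = Fin fx ->
    ER_mul_ge1 (dphi (fx - fstar)) (lazy_slope f x).

Definition ER_liminf_zero (u : nat -> ER) : Prop :=
  (forall eps, 0 < eps -> exists N, forall k, (k >= N)%nat -> Rlt_ER (- eps) (u k)) /\
  (forall eps, 0 < eps -> forall N, exists k, (k >= N)%nat /\ ER_ltR (u k) eps).

(* Along the iteration, H1, KL at x_(j+1) and H2 give the step estimate
     2 |x_(j+2) - x_(j+1)| <= |x_(j+1) - x_j| + eps_(j+1) + M (P_(j+1) - P_(j+2)),
   with P_k = phi (f x_k - fstar).  It telescopes: as long as the iterates stay where KL holds,
   their total length is bounded by the budget of S(ii), which keeps them within distance rho
   of xstar, so by S(i) and induction they never leave that region.  Finite length gives a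
   Cauchy sequence.  Summing H2 against the non-summable b shows that the slopes cannot stay
   away from 0; if the values stayed above fstar + e, KL would keep the slopes bounded below,
   so f x_k decreases to fstar, and lower semicontinuity gives f xbar <= fstar. *)

From Stdlib Require Import Reals Lra Psatz Classical ClassicalEpsilon.
Open Scope R_scope.

Section InnerProduct.
Variable E : PreHilbert.
Implicit Types u v w : E.

Lemma Hinner_add_r u v w : Hinner u (Hadd v w) = Hinner u v + Hinner u w.
Proof. rewrite Hinner_sym, Hinner_add_l, (Hinner_sym _ v), (Hinner_sym _ w); reflexivity. Qed.

Lemma Hinner_scal_r c u v : Hinner u (Hscal c v) = c * Hinner u v.
Proof. rewrite Hinner_sym, Hinner_scal_l, Hinner_sym; reflexivity. Qed.

Lemma Hinner_zero_l v : Hinner (@Hzero E) v = 0.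
Proof. pose proof (Hinner_add_l E Hzero Hzero v) as H. rewrite Hadd_zero in H. lra. Qed.

Lemma Hnorm_nonneg u : 0 <= Hnorm u.
Proof. apply sqrt_pos. Qed.

Lemma Hnorm_sqr u : Hnorm u * Hnorm u = Hinner u u.
Proof. apply sqrt_sqrt, Hinner_pos. Qed.

Lemma Hinner_add_scal u v c : Hinner (Hadd u (Hscal c v)) (Hadd u (Hscal c v))
  = Hinner u u + 2 * c * Hinner u v + c * c * Hinner v v.
Proof.
  rewrite Hinner_add_l, !Hinner_add_r, !Hinner_scal_l, !Hinner_scal_r, (Hinner_sym _ v u).
  ring.
Qed.

Lemma Hinner_le_norm u v : Hinner u v <= Hnorm u * Hnorm v.
Proof.
  destruct (Req_dec (Hinner v v) 0) as [Hv|Hv].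
  { apply Hinner_def in Hv; subst v. rewrite Hinner_sym, Hinner_zero_l.
    apply Rmult_le_pos; apply Hnorm_nonneg. }
  pose proof (Hinner_pos E u) as Pu. pose proof (Hinner_pos E v) as Pv.
  set (A := Hinner u u) in *. set (B := Hinner u v). set (C := Hinner v v) in *.
  (* minimise the quadratic c |-> |u + c v|^2 at c = -B/C *)
  assert (HBAC : B * B <= A * C).
  { pose proof (Hinner_pos E (Hadd u (Hscal (- B / C) v))) as Q.
    rewrite Hinner_add_scal in Q. fold A B C in Q.
    replace (A + 2 * (- B / C) * B + - B / C * (- B / C) * C)
      with ((A * C - B * B) / C) in Q by (field; lra).
    assert (Hprod : 0 <= (A * C - B * B) / C * C) by (apply Rmult_le_pos; lra).
    replace ((A * C - B * B) / C * C) with (A * C - B * B) in Hprod by (field; lra). lra. }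
  apply Rle_trans with (Rabs B); [apply Rle_abs|].
  unfold Hnorm. rewrite <- sqrt_mult, <- sqrt_Rsqr_abs by assumption.
  apply sqrt_le_1_alt. unfold Rsqr. exact HBAC.
Qed.

Lemma Hnorm_add_le u v : Hnorm (Hadd u v) <= Hnorm u + Hnorm v.
Proof.
  pose proof (Hinner_le_norm u v). pose proof (Hnorm_sqr u). pose proof (Hnorm_sqr v).
  pose proof (Hnorm_nonneg u). pose proof (Hnorm_nonneg v).
  unfold Hnorm at 1. rewrite <- (sqrt_square (Hnorm u + Hnorm v)) by lra.
  apply sqrt_le_1_alt. rewrite Hinner_add_l, !Hinner_add_r, (Hinner_sym _ v u). nra.
Qed.

Lemma Hsub_chain u v w : Hsub u w = Hadd (Hsub u v) (Hsub v w).
Proof.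
  unfold Hsub. rewrite Hadd_assoc. f_equal.
  rewrite <- Hadd_assoc, (Hadd_comm _ _ v), Hadd_opp, Hadd_zero. reflexivity.
Qed.

Lemma Hnorm_sub_le u v w : Hnorm (Hsub u w) <= Hnorm (Hsub u v) + Hnorm (Hsub v w).
Proof. rewrite (Hsub_chain u v w). apply Hnorm_add_le. Qed.

Lemma Hnorm_sub_sym u v : Hnorm (Hsub u v) = Hnorm (Hsub v u).
Proof.
  assert (Hopp : Hsub v u = Hscal (-1) (Hsub u v)).
  { unfold Hsub. rewrite Hscal_distr_l, Hscal_assoc.
    replace (-1 * -1) with 1 by ring. rewrite Hscal_one, Hadd_comm. reflexivity. }
  rewrite Hopp. unfold Hnorm. rewrite Hinner_scal_l, Hinner_scal_r. f_equal. ring.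
Qed.

Lemma Hnorm_sub_diag u : Hnorm (Hsub u u) = 0.
Proof. unfold Hsub, Hnorm. rewrite Hadd_opp, Hinner_zero_l. apply sqrt_0. Qed.

End InnerProduct.

Lemma double_le_add_of_sqr_le u c m : 0 <= u -> 0 <= c -> 0 <= m -> u ^ 2 <= c * m ->
  2 * u <= c + m.
Proof. intros Hu Hc Hm Hucm. pose proof (pow2_ge_0 (c - m)). nra. Qed.

Lemma sqr_le_of_descent_chain dd A B M Dp v c s t ps pt :
  0 < A -> 0 < B -> 0 < Dp -> 0 <= M -> 0 <= c ->
  A * dd ^ 2 <= s - t -> Dp * (s - t) <= ps - pt -> 1 <= Dp * v -> B * v <= c ->
  1 <= M * (A * B) -> dd ^ 2 <= M * c * (ps - pt).
Proof.
  intros HA HB HDp HM Hc Hdec Htan HKL Hslope HMAB.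
  assert (HBc : B <= Dp * c).
  { assert (B * 1 <= B * (Dp * v)) by (apply Rmult_le_compat_l; lra).
    assert (Dp * (B * v) <= Dp * c) by (apply Rmult_le_compat_l; lra). nra. }
  assert (HAdd : A * dd ^ 2 * Dp <= ps - pt).
  { assert (A * dd ^ 2 * Dp <= (s - t) * Dp) by (apply Rmult_le_compat_r; lra). lra. }
  assert (HABdd : A * B * dd ^ 2 <= c * (ps - pt)).
  { assert (0 <= A * dd ^ 2) by (apply Rmult_le_pos; [lra | apply pow2_ge_0]).
    assert (A * dd ^ 2 * B <= A * dd ^ 2 * (Dp * c)) by (apply Rmult_le_compat_l; lra).
    assert (c * (A * dd ^ 2 * Dp) <= c * (ps - pt)) by (apply Rmult_le_compat_l; lra). nra. }
  assert (dd ^ 2 * 1 <= dd ^ 2 * (M * (A * B))) by (apply Rmult_le_compat_l; [apply pow2_ge_0 | lra]).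
  assert (M * (A * B * dd ^ 2) <= M * (c * (ps - pt))) by (apply Rmult_le_compat_l; lra).
  nra.
Qed.

Lemma Rlt_ER_le t s eta : t <= s -> Rlt_ER s eta -> Rlt_ER t eta.
Proof. destruct eta; simpl; lra. Qed.

Lemma chord_le_derivative (g : R -> R) s D h c :
  derivable_pt_lim g s D ->
  (forall l, 0 < l <= 1 -> l * c <= g (s + l * h) - g s) -> c <= D * h.
Proof.
  intros Hder Hchord. apply Rnot_lt_le; intro Hlt.
  destruct (Req_dec h 0) as [->|Hh].
  { specialize (Hchord 1 ltac:(lra)). rewrite Rmult_0_r, Rplus_0_r in Hchord. lra. }
  assert (Hah : 0 < Rabs h) by (apply Rabs_pos_lt; exact Hh).
  set (gap := c - D * h).
  destruct (Hder (gap / (2 * Rabs h))) as [dl Hdl].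
  { apply Rdiv_lt_0_compat; unfold gap; lra. }
  pose proof (cond_pos dl) as Hdl0.
  set (l := Rmin 1 (dl / (2 * Rabs h))).
  assert (Hl0 : 0 < l) by (apply Rmin_pos; [lra | apply Rdiv_lt_0_compat; lra]).
  assert (Hl1 : l <= 1) by apply Rmin_l.
  assert (Hlh : Rabs (l * h) < dl).
  { rewrite Rabs_mult, (Rabs_pos_eq l) by lra.
    apply Rle_lt_trans with (dl / (2 * Rabs h) * Rabs h).
    - apply Rmult_le_compat_r; [lra | apply Rmin_r].
    - replace (dl / (2 * Rabs h) * Rabs h) with (dl / 2) by (field; lra). lra. }
  assert (Hlh0 : l * h <> 0) by (apply Rmult_integral_contrapositive; split; lra).
  specialize (Hdl (l * h) Hlh0 Hlh). specialize (Hchord l (conj Hl0 Hl1)).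
  set (X := g (s + l * h) - g s) in *.
  assert (HX : Rabs (X - D * (l * h)) < l * gap / 2).
  { replace (X - D * (l * h)) with ((X / (l * h) - D) * (l * h)) by (field; lra).
    replace (l * gap / 2) with (gap / (2 * Rabs h) * Rabs (l * h))
      by (rewrite Rabs_mult, (Rabs_pos_eq l) by lra; field; lra).
    rewrite Rabs_mult. apply Rmult_lt_compat_r; [apply Rabs_pos_lt|]; assumption. }
  apply Rabs_def2 in HX. unfold gap in HX. nra.
Qed.

Section Desingularizing.
Variables (eta : ER) (phi dphi : R -> R).
Hypothesis Hdesing : desing eta phi dphi.

Lemma desing_supergradient s t : 0 < s -> Rlt_ER s eta -> in_0_eta t eta ->
  phi t <= phi s + dphi s * (t - s).
Proof.
  intros Hs Hse Ht. destruct Hdesing as (_ & _ & Hconc & Hder & _).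
  enough (phi t - phi s <= dphi s * (t - s)) by lra.
  apply (chord_le_derivative phi s); [exact (Hder s Hs Hse)|].
  intros l Hl.
  pose proof (Hconc t s l Ht (conj (Rlt_le _ _ Hs) Hse) (conj (Rlt_le _ _ (proj1 Hl)) (proj2 Hl))).
  replace (s + l * (t - s)) with (l * t + (1 - l) * s) by ring. lra.
Qed.

Lemma desing_monotone t s : 0 <= t -> t <= s -> Rlt_ER s eta -> phi t <= phi s.
Proof.
  intros Ht Hts Hs. destruct (Req_dec s 0) as [->|Hs0].
  { replace t with 0 by lra. lra. }
  pose proof (desing_supergradient s t ltac:(lra) Hs (conj Ht (Rlt_ER_le _ _ _ Hts Hs))).
  destruct Hdesing as (_ & _ & _ & _ & _ & Hpos). specialize (Hpos s ltac:(lra) Hs). nra.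
Qed.

Lemma desing_nonneg s : 0 <= s -> Rlt_ER s eta -> 0 <= phi s.
Proof.
  intros Hs Hse. pose proof (desing_monotone 0 s (Rle_refl 0) Hs Hse).
  destruct Hdesing as (H0 & _). lra.
Qed.

Lemma desing_deriv_mul_le s : 0 < s -> Rlt_ER s eta -> dphi s * s <= 2 * phi s.
Proof.
  intros Hs Hse.
  assert (Hhalf : in_0_eta (s / 2) eta) by (split; [lra | apply (Rlt_ER_le _ s); [lra | exact Hse]]).
  pose proof (desing_supergradient s (s / 2) Hs Hse Hhalf).
  pose proof (desing_nonneg (s / 2) (proj1 Hhalf) (proj2 Hhalf)). lra.
Qed.

Lemma desing_pos s : 0 < s -> Rlt_ER s eta -> 0 < phi s.
Proof.
  intros Hs Hse. pose proof (desing_deriv_mul_le s Hs Hse).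
  destruct Hdesing as (_ & _ & _ & _ & _ & Hpos). specialize (Hpos s Hs Hse).
  assert (0 < dphi s * s) by (apply Rmult_lt_0_compat; lra). lra.
Qed.

End Desingularizing.

(* [partial_sum u n] is the sum of the first [n] terms, unlike [sum_f_R0 u n] which has [n+1]. *)
Fixpoint partial_sum (u : nat -> R) (n : nat) : R :=
  match n with O => 0 | S n => partial_sum u n + u n end.

Lemma partial_sum_S_sum_f_R0 u n : partial_sum u (S n) = sum_f_R0 u n.
Proof. induction n as [|n IH]; [simpl; ring|]. simpl in *. rewrite IH. reflexivity. Qed.

Lemma partial_sum_nonneg u n : (forall i, 0 <= u i) -> 0 <= partial_sum u n.
Proof. intros Hu; induction n as [|n IH]; simpl; [lra|]. specialize (Hu n); lra. Qed.

Lemma partial_sum_le_mono u m n : (forall i, 0 <= u i) -> (m <= n)%nat ->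
  partial_sum u m <= partial_sum u n.
Proof. intros Hu Hmn; induction Hmn as [|n _ IH]; simpl; [lra|]. specialize (Hu n); lra. Qed.

Lemma partial_sum_add u v n : partial_sum (fun i => u i + v i) n = partial_sum u n + partial_sum v n.
Proof. induction n as [|n IH]; simpl; [ring|]. rewrite IH; ring. Qed.

Lemma partial_sum_shift u n : partial_sum (fun i => u (S i)) n + u 0%nat = partial_sum u (S n).
Proof. induction n as [|n IH]; simpl in *; lra. Qed.

Lemma partial_sum_le_infinite_sum u l n : (forall i, 0 <= u i) -> infinite_sum u l ->
  partial_sum u n <= l.
Proof.
  intros Hu Hl. apply Rnot_lt_le; intro Hlt.
  destruct (Hl (partial_sum u n - l) ltac:(lra)) as [N HN].
  specialize (HN (max N n) (Nat.le_max_l _ _)). rewrite <- partial_sum_S_sum_f_R0 in HN.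
  assert (partial_sum u n <= partial_sum u (S (max N n))) by (apply partial_sum_le_mono; [|lia]; auto).
  unfold Rdist in HN. apply Rabs_def2 in HN. lra.
Qed.

Lemma summable_of_bounded_partial_sums u B : (forall i, 0 <= u i) ->
  (forall n, partial_sum u n <= B) -> exists l, infinite_sum u l.
Proof.
  intros Hu HB. destruct (growing_cv (sum_f_R0 u)) as [l Hl].
  - intro n. simpl. specialize (Hu (S n)). lra.
  - exists B. intros r [n ->]. rewrite <- partial_sum_S_sum_f_R0. apply HB.
  - exists l. exact Hl.
Qed.

Lemma summable_of_eventually_dominated u w kap N B :
  (forall i, 0 <= u i) -> (forall i, 0 <= w i) -> 0 < kap ->
  (forall i, (N <= i)%nat -> kap * u i <= w i) -> (forall n, partial_sum w n <= B) ->
  exists l, infinite_sum u l.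
Proof.
  intros Hu Hw Hkap Hdom HB.
  assert (Hpart : forall n, kap * partial_sum u n <= kap * partial_sum u N + partial_sum w n).
  { induction n as [|n IH]; simpl.
    - pose proof (partial_sum_nonneg u N Hu). nra.
    - destruct (Compare_dec.le_lt_dec N n) as [HNn|HnN].
      + specialize (Hdom n HNn). lra.
      + assert (Hle : partial_sum u (S n) <= partial_sum u N)
          by (apply partial_sum_le_mono; [exact Hu | lia]).
        simpl in Hle. pose proof (partial_sum_nonneg w n Hw). specialize (Hw n).
        assert (kap * (partial_sum u n + u n) <= kap * partial_sum u N)
          by (apply Rmult_le_compat_l; lra).
        lra. }
  apply (summable_of_bounded_partial_sums u ((kap * partial_sum u N + B) / kap) Hu).
  intro n. apply (Rmult_le_reg_l kap); [exact Hkap|].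
  replace (kap * ((kap * partial_sum u N + B) / kap)) with (kap * partial_sum u N + B)
    by (field; lra).
  specialize (Hpart n). specialize (HB n). lra.
Qed.

Lemma Un_cv_of_decreasing u l : Un_decreasing u -> (forall k, l <= u k) ->
  (forall e, 0 < e -> exists k, u k < l + e) -> Un_cv u l.
Proof.
  intros Hdec Hlow Happ e He. destruct (Happ e He) as [N HN]. exists N. intros n Hn.
  pose proof (decreasing_prop u N n Hdec Hn). specialize (Hlow n).
  unfold Rdist. rewrite Rabs_pos_eq; lra.
Qed.

Section Sequences.
Variable E : PreHilbert.
Variable x : nat -> E.

Lemma Hnorm_sub_le_partial_sum m n : (m <= n)%nat ->
  Hnorm (Hsub (x n) (x m)) <= partial_sum (fun k => Hnorm (Hsub (x (S k)) (x k))) n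
                              - partial_sum (fun k => Hnorm (Hsub (x (S k)) (x k))) m.
Proof.
  intros Hmn; induction Hmn as [|n _ IH]; simpl.
  - rewrite Hnorm_sub_diag. lra.
  - pose proof (Hnorm_sub_le E (x (S n)) (x n) (x m)). lra.
Qed.

Lemma Hcauchy_of_bounded_steps B :
  (forall n, partial_sum (fun k => Hnorm (Hsub (x (S k)) (x k))) n <= B) -> Hcauchy x.
Proof.
  set (d := fun k => Hnorm (Hsub (x (S k)) (x k))). intro HB.
  destruct (summable_of_bounded_partial_sums d B (fun k => Hnorm_nonneg E _) HB) as [l Hl].
  assert (Hclose : forall e, 0 < e -> exists N, forall m n, (N <= m)%nat -> (m <= n)%nat ->
            Hnorm (Hsub (x n) (x m)) < e).
  { intros e He. destruct (Hl (e / 2) ltac:(lra)) as [N HN]. exists (S N).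
    intros m n Hm Hmn. destruct m as [|m]; [lia|]. destruct n as [|n]; [lia|].
    pose proof (Hnorm_sub_le_partial_sum _ _ Hmn) as Hd. fold d in Hd.
    rewrite !partial_sum_S_sum_f_R0 in Hd.
    pose proof (HN n ltac:(lia)) as Hn. pose proof (HN m ltac:(lia)) as Hm'.
    unfold Rdist in Hn, Hm'. apply Rabs_def2 in Hn. apply Rabs_def2 in Hm'. lra. }
  intros e He. destruct (Hclose e He) as [N HN]. exists N. intros n m Hn Hm.
  destruct (Nat.le_ge_cases m n).
  - apply HN; assumption.
  - rewrite Hnorm_sub_sym. apply HN; assumption.
Qed.

Lemma Hcv_norm_sub_le xbar c r : Hcv x xbar ->
  (forall k, Hnorm (Hsub (x k) c) <= r) -> Hnorm (Hsub xbar c) <= r.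
Proof.
  intros Hcv Hr. apply Rnot_lt_le; intro Hlt.
  destruct (Hcv (Hnorm (Hsub xbar c) - r) ltac:(lra)) as [N HN].
  specialize (HN N (le_n _)). rewrite Hnorm_sub_sym in HN.
  pose proof (Hnorm_sub_le E xbar (x N) c). specialize (Hr N). lra.
Qed.

Lemma lsc_le_limit (f : E -> ER) (g : nat -> R) xbar l : lsc f -> Hcv x xbar ->
  (forall k, f (x k) = Fin (g k)) -> Un_cv g l -> ER_le (f xbar) (Fin l).
Proof.
  intros Hlsc Hcv Hg Hgl.
  assert (Hbelow : forall r, l < r -> ~ Rlt_ER r (f xbar)).
  { intros r Hlr Hr. destruct (Hlsc xbar r Hr) as [dl [Hdl Hnear]].
    destruct (Hcv dl Hdl) as [N1 HN1]. destruct (Hgl (r - l) ltac:(lra)) as [N2 HN2].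
    specialize (HN1 (max N1 N2) (Nat.le_max_l _ _)). specialize (HN2 (max N1 N2) (Nat.le_max_r _ _)).
    specialize (Hnear _ HN1). rewrite Hg in Hnear. simpl in Hnear.
    unfold Rdist in HN2. apply Rabs_def2 in HN2. lra. }
  destruct (f xbar) as [y|]; simpl.
  - apply Rnot_lt_le; intro Hly. apply (Hbelow ((l + y) / 2)); simpl; lra.
  - apply (Hbelow (l + 1)); simpl; [lra | exact I].
Qed.

End Sequences.

Lemma is_inf_nonneg_exists (S : R -> Prop) : (exists r, S r) -> (forall r, S r -> 0 <= r) ->
  exists s, is_inf S s.
Proof.
  intros [r0 Hr0] Hlb.
  destruct (completeness (fun r => S (- r))) as [m [Hub Hlub]].
  - exists 0. intros r Hr. specialize (Hlb _ Hr). lra.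
  - exists (- r0). rewrite Ropp_involutive. exact Hr0.
  - exists (- m). split.
    + intros r Hr. enough (- r <= m) by lra. apply Hub. rewrite Ropp_involutive. exact Hr.
    + intros t Ht. enough (m <= - t) by lra. apply Hlub. intros r Hr. specialize (Ht _ Hr). lra.
Qed.

Lemma lazy_slope_nonneg (E : PreHilbert) (f : E -> ER) y v : lazy_slope f y = Fin v -> 0 <= v.
Proof.
  unfold lazy_slope. destruct excluded_middle_informative as [Hsub|]; [|discriminate].
  intro Hv; injection Hv as <-.
  set (N := fun r => exists p, lim_sub f y p /\ r = Hnorm p).
  assert (HN : forall r, N r -> 0 <= r) by (intros r [p [_ ->]]; apply Hnorm_nonneg).
  assert (Hinf : exists s, is_inf N s).
  { apply is_inf_nonneg_exists; [|exact HN]. destruct Hsub as [p Hp]. exists (Hnorm p), p. auto. }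
  exact (proj2 (epsilon_spec (inhabits 0) _ Hinf) 0 HN).
Qed.

(* Junk value [0] at [+oo]; only read where [f] is known to be finite. *)
Definition fin_part (e : ER) : R := match e with Fin r => r | PInf => 0 end.

Lemma uGamma_fin_part {E : PreHilbert} {f : E -> ER} {xstar fstar eta r y} :
  uGamma f xstar fstar eta r y ->
  f y = Fin (fin_part (f y)) /\ fstar <= fin_part (f y) /\
  Rlt_ER (fin_part (f y) - fstar) eta /\ Hnorm (Hsub y xstar) < r.
Proof. intros [Hn [fy [Hfy [Hlow Heta]]]]. rewrite Hfy. simpl. auto. Qed.

Lemma uGamma_weaken {E : PreHilbert} {f : E -> ER} {xstar fstar eta r r' y} :
  r <= r' -> uGamma f xstar fstar eta r y -> uGamma f xstar fstar eta r' y.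
Proof. intros Hr [Hn Hf]. split; [lra | exact Hf]. Qed.

Section KL_descent.

Context {E : PreHilbert} {f : E -> ER} {xstar : E} {fstar : R} {eta : ER}
  {delta rho : R} {phi dphi : R -> R} {x : nat -> E} {a b eps : nat -> R} {M Seps f0 : R}.

Hypothesis Hdesing : desing eta phi dphi.
Hypothesis HKL : forall y fy, Gamma f xstar fstar eta delta y -> f y = Fin fy ->
  ER_mul_ge1 (dphi (fy - fstar)) (lazy_slope f y).
Hypothesis H1 : forall k, 0 < a k /\
  ER_le (ER_addR (f (x (S k))) (a k * (Hnorm (Hsub (x (S k)) (x k)))^2)) (f (x k)).
Hypothesis H2 : forall k, 0 < b (S k) /\ 0 <= eps (S k) /\
  ER_le (match lazy_slope f (x (S k)) with
         | Fin v => Fin (b (S k) * v) | PInf => PInf end)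
        (Fin (Hnorm (Hsub (x (S k)) (x k)) + eps (S k))).
Hypothesis Hb : ~ (exists l, infinite_sum (fun i => b (S i)) l).
Hypothesis HM : is_upper_bound (fun r => exists k, (1 <= k)%nat /\ r = / (a k * b k)) M.
Hypothesis Heps : infinite_sum (fun i => eps (S i)) Seps.
Hypothesis Hrho : delta > rho.
Hypothesis HS : forall k, (forall i, (i <= k)%nat -> uGamma f xstar fstar eta rho (x i)) ->
  uGamma f xstar fstar eta delta (x (S k)).
Hypothesis HG0 : Gamma f xstar fstar eta rho (x 0%nat).
Hypothesis Hf0 : f (x 0%nat) = Fin f0.
Hypothesis Hbudget : Hnorm (Hsub xstar (x 0%nat)) + 2 * sqrt ((f0 - fstar) / a 0%nat)
  + M * phi (f0 - fstar) + Seps < rho.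

Local Notation fval k := (fin_part (f (x k))).
Local Notation step k := (Hnorm (Hsub (x (S k)) (x k))).
Local Notation P k := (phi (fval k - fstar)).
Local Notation uG r k := (uGamma f xstar fstar eta r (x k)).
Local Notation budget := (2 * sqrt ((f0 - fstar) / a 0%nat) + M * phi (f0 - fstar) + Seps).

Lemma fval_0 : fval 0%nat = f0.
Proof. rewrite Hf0. reflexivity. Qed.

Lemma M_mul_ge1 k : (1 <= k)%nat -> 1 <= M * (a k * b k).
Proof.
  intros Hk. destruct k as [|k]; [lia|].
  assert (Hab : 0 < a (S k) * b (S k)) by (apply Rmult_lt_0_compat; [apply H1 | apply H2]).
  assert (HMk : / (a (S k) * b (S k)) <= M) by (apply HM; exists (S k); auto).
  apply Rmult_le_compat_r with (r := a (S k) * b (S k)) in HMk; [|lra].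
  rewrite Rinv_l in HMk; lra.
Qed.

Lemma M_nonneg : 0 <= M.
Proof.
  pose proof (M_mul_ge1 1 (le_n _)).
  assert (0 < a 1%nat * b 1%nat) by (apply Rmult_lt_0_compat; [apply H1 | apply (H2 0%nat)]).
  nra.
Qed.

Lemma fval_decrease k : uG delta k -> uG delta (S k) -> fval (S k) + a k * step k ^ 2 <= fval k.
Proof.
  intros U0 U1. destruct (uGamma_fin_part U0) as [F0 _]. destruct (uGamma_fin_part U1) as [F1 _].
  destruct (H1 k) as [_ Hle]. rewrite F0, F1 in Hle. exact Hle.
Qed.

Lemma fval_le k : uG delta k -> uG delta (S k) -> fval (S k) <= fval k.
Proof.
  intros U0 U1. pose proof (fval_decrease k U0 U1).
  assert (0 <= a k * step k ^ 2) by (apply Rmult_le_pos; [apply Rlt_le, H1 | apply pow2_ge_0]).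
  lra.
Qed.

Lemma P_le k : uG delta k -> uG delta (S k) -> P (S k) <= P k.
Proof.
  intros U0 U1. pose proof (fval_le k U0 U1).
  destruct (uGamma_fin_part U0) as (_ & _ & E0 & _). destruct (uGamma_fin_part U1) as (_ & G1 & _).
  apply (desing_monotone eta phi dphi Hdesing); [lra | lra | exact E0].
Qed.

Lemma P_nonneg k : uG delta k -> 0 <= P k.
Proof.
  intros U. destruct (uGamma_fin_part U) as (_ & G & Eta & _).
  apply (desing_nonneg eta phi dphi Hdesing); [lra | exact Eta].
Qed.

(* Chain H1, the tangent inequality of [phi] at [f(x (S j)) - fstar], KL at [x (S j)], H2 and
   [1 <= M a b]; if [f (x (S j)) = fstar], H1 alone forces a zero step. *)
Lemma step_sqr_le j : uG delta (S j) -> uG delta (S (S j)) ->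
  step (S j) ^ 2 <= M * (step j + eps (S j)) * (P (S j) - P (S (S j))).
Proof.
  intros U1 U2. pose proof (fval_decrease (S j) U1 U2) as Hdec.
  destruct (uGamma_fin_part U1) as (F1 & G1 & E1 & N1).
  destruct (uGamma_fin_part U2) as (_ & G2 & E2 & _).
  pose proof (proj1 (H1 (S j))) as Ha.
  assert (Hc0 : 0 <= step j + eps (S j)).
  { pose proof (Hnorm_nonneg E (Hsub (x (S j)) (x j))). pose proof (proj1 (proj2 (H2 j))). lra. }
  assert (Hrhs : 0 <= M * (step j + eps (S j)) * (P (S j) - P (S (S j)))).
  { pose proof M_nonneg. pose proof (P_le (S j) U1 U2).
    apply Rmult_le_pos; [apply Rmult_le_pos|]; lra. }
  set (s := fval (S j) - fstar) in *. set (t := fval (S (S j)) - fstar) in *.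
  set (dd := step (S j)) in *. set (c := step j + eps (S j)) in *.
  destruct (Rle_lt_or_eq_dec _ _ G1) as [Hs|Hs].
  2:{ assert (a (S j) * dd ^ 2 <= 0) by lra. assert (dd ^ 2 <= 0) by nra. lra. }
  assert (Hs0 : 0 < s) by (unfold s; lra).
  assert (HG1 : Gamma f xstar fstar eta delta (x (S j))).
  { split; [exact N1 | exists (fval (S j)); auto]. }
  pose proof (HKL _ _ HG1 F1) as HKL1. fold s in HKL1.
  destruct (H2 j) as (Hbj & _ & Hslope).
  destruct (lazy_slope f (x (S j))) as [v|] eqn:Hv; simpl in Hslope, HKL1; [|contradiction].
  fold c in Hslope.
  assert (Ht0 : 0 <= t) by (unfold t; lra).
  pose proof (desing_supergradient eta phi dphi Hdesing s t Hs0 E1 (conj Ht0 E2)).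
  destruct Hdesing as (_ & _ & _ & _ & _ & Hdpos).
  apply (sqr_le_of_descent_chain _ (a (S j)) (b (S j)) M (dphi s) v c s t); try lra.
  - exact (Hdpos s Hs0 E1).
  - exact M_nonneg.
  - unfold s, t. lra.
  - exact (M_mul_ge1 (S j) ltac:(lia)).
Qed.

Lemma step_estimate j : uG delta (S j) -> uG delta (S (S j)) ->
  2 * step (S j) <= step j + eps (S j) + M * (P (S j) - P (S (S j))).
Proof.
  intros U1 U2. apply double_le_add_of_sqr_le.
  - apply Hnorm_nonneg.
  - pose proof (Hnorm_nonneg E (Hsub (x (S j)) (x j))). pose proof (proj1 (proj2 (H2 j))). lra.
  - apply Rmult_le_pos; [apply M_nonneg|]. pose proof (P_le (S j) U1 U2). lra.
  - rewrite <- Rmult_assoc, (Rmult_comm _ M). exact (step_sqr_le j U1 U2).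
Qed.

Lemma partial_steps_telescope n : (forall i, (i <= S n)%nat -> uG delta i) ->
  partial_sum (fun k => step k) (S n) + step n
  <= 2 * step 0%nat + partial_sum (fun i => eps (S i)) n + M * (P 1%nat - P (S n)).
Proof.
  induction n as [|n IH]; intros Hin.
  - simpl. lra.
  - pose proof (IH (fun i Hi => Hin i (le_S _ _ Hi))).
    pose proof (step_estimate n (Hin (S n) (le_S _ _ (le_n _))) (Hin (S (S n)) (le_n _))).
    simpl in *. lra.
Qed.

Lemma first_step_le : uG delta 0%nat -> uG delta 1%nat -> step 0%nat <= sqrt ((f0 - fstar) / a 0%nat).
Proof.
  intros U0 U1. pose proof (fval_decrease 0 U0 U1) as Hdec. rewrite fval_0 in Hdec.
  destruct (uGamma_fin_part U1) as (_ & G1 & _). pose proof (proj1 (H1 0%nat)) as Ha.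
  rewrite <- (sqrt_square (step 0%nat)) by apply Hnorm_nonneg.
  apply sqrt_le_1_alt, (Rmult_le_reg_l (a 0%nat)); [exact Ha|].
  replace (a 0%nat * ((f0 - fstar) / a 0%nat)) with (f0 - fstar) by (field; lra). nra.
Qed.

Lemma partial_steps_le_budget n : (forall i, (i <= S n)%nat -> uG delta i) ->
  partial_sum (fun k => step k) (S n) <= budget.
Proof.
  intros Hin.
  pose proof (Hin 0%nat (Nat.le_0_l _)) as U0. pose proof (Hin 1%nat ltac:(lia)) as U1.
  pose proof (partial_steps_telescope n Hin).
  pose proof (first_step_le U0 U1).
  pose proof (partial_sum_le_infinite_sum (fun i => eps (S i)) Seps n (fun i => proj1 (proj2 (H2 i))) Heps).
  pose proof (P_nonneg (S n) (Hin (S n) (le_n _))). pose proof (P_le 0 U0 U1).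
  pose proof (Hnorm_nonneg E (Hsub (x (S n)) (x n))).
  assert (0 <= M * (P 0%nat - P 1%nat + P (S n))) by (apply Rmult_le_pos; [apply M_nonneg | lra]).
  rewrite fval_0 in *. lra.
Qed.

Lemma iterates_in_uGamma k : uG rho k.
Proof.
  enough (Hupto : forall i, (i <= k)%nat -> uG rho i) by exact (Hupto k (le_n _)).
  induction k as [|k IH]; intros i Hi.
  - inversion Hi as [Hi0|]. destruct HG0 as [Hn [fx [Hfx [Hlow Heta]]]].
    split; [exact Hn | exists fx; repeat split; auto; lra].
  - destruct (Nat.eq_dec i (S k)) as [->|Hne]; [|apply IH; lia].
    destruct (HS k IH) as [_ Hval]. split; [|exact Hval].
    assert (Hin : forall i, (i <= S k)%nat -> uG delta i).
    { intros i' Hi'. destruct (Nat.eq_dec i' (S k)) as [->|Hne'].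
      - exact (HS k IH).
      - apply (uGamma_weaken (Rlt_le _ _ Hrho)), IH. lia. }
    pose proof (partial_steps_le_budget k Hin).
    pose proof (Hnorm_sub_le_partial_sum E x 0 (S k) (Nat.le_0_l _)) as Hdist.
    change (partial_sum _ 0) with 0 in Hdist.
    pose proof (Hnorm_sub_le E (x (S k)) (x 0%nat) xstar).
    rewrite (Hnorm_sub_sym E (x 0%nat) xstar) in *. lra.
Qed.

Lemma iterates_in_uGamma_delta k : uG delta k.
Proof. exact (uGamma_weaken (Rlt_le _ _ Hrho) (iterates_in_uGamma k)). Qed.

Lemma partial_steps_bounded n : partial_sum (fun k => step k) n <= budget.
Proof.
  apply Rle_trans with (partial_sum (fun k => step k) (S n)).
  - apply partial_sum_le_mono; [intro; apply Hnorm_nonneg | lia].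
  - apply partial_steps_le_budget. intros i _. apply iterates_in_uGamma_delta.
Qed.

Lemma shifted_steps_summable : exists l, infinite_sum (fun i => step (S i)) l.
Proof.
  apply (summable_of_bounded_partial_sums _ budget); [intro; apply Hnorm_nonneg|].
  intro n. pose proof (partial_sum_shift (fun k => step k) n).
  pose proof (partial_steps_bounded (S n)). pose proof (Hnorm_nonneg E (Hsub (x 1%nat) (x 0%nat))).
  lra.
Qed.

(* Otherwise H2 would bound [b] by a summable sequence, contradicting H3 (ii). *)
Lemma slopes_not_eventually_ge kap N : 0 < kap ->
  ~ (forall k, (N <= k)%nat -> forall v, lazy_slope f (x (S k)) = Fin v -> kap <= v).
Proof.
  intros Hkap Hge. apply Hb.
  apply (summable_of_eventually_dominated _ (fun i => step i + eps (S i)) kap N (budget + Seps)).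
  - intro i. apply Rlt_le, H2.
  - intro i. pose proof (Hnorm_nonneg E (Hsub (x (S i)) (x i))). pose proof (proj1 (proj2 (H2 i))). lra.
  - exact Hkap.
  - intros i Hi. destruct (H2 i) as (Hbi & _ & Hslope).
    destruct (lazy_slope f (x (S i))) as [v|] eqn:Hv; simpl in Hslope; [|contradiction].
    specialize (Hge i Hi v Hv).
    assert (kap * b (S i) <= v * b (S i)) by (apply Rmult_le_compat_r; lra). lra.
  - intro n. rewrite partial_sum_add.
    pose proof (partial_steps_bounded n).
    pose proof (partial_sum_le_infinite_sum (fun i => eps (S i)) Seps n (fun i => proj1 (proj2 (H2 i))) Heps).
    lra.
Qed.

Lemma slope_liminf_zero : ER_liminf_zero (fun k => lazy_slope f (x k)).
Proof.
  split.
  - intros e He. exists 0%nat. intros k _.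
    destruct (lazy_slope f (x k)) as [v|] eqn:Hv; simpl; [|exact I].
    pose proof (lazy_slope_nonneg E f _ _ Hv). lra.
  - intros e He N. apply NNPP; intro Hnone. apply (slopes_not_eventually_ge e N He).
    intros k Hk v Hv. apply Rnot_lt_le; intro Hlt. apply Hnone.
    exists (S k). split; [lia|]. rewrite Hv. exact Hlt.
Qed.

Lemma f0_gap_lt_eta : Rlt_ER (f0 - fstar) eta.
Proof. rewrite <- fval_0. exact (proj1 (proj2 (proj2 (uGamma_fin_part (iterates_in_uGamma 0))))). Qed.

Lemma fval_decreasing : Un_decreasing (fun k => fval k).
Proof. intro k. apply fval_le; apply iterates_in_uGamma_delta. Qed.

(* From KL and [dphi s * s <= 2 phi s <= 2 phi (f0 - fstar)]. *)
Lemma slope_ge_of_value_gap e k v : e <= fval (S k) - fstar -> 0 < e ->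
  lazy_slope f (x (S k)) = Fin v -> e <= 2 * phi (f0 - fstar) * v.
Proof.
  intros Hgap He Hv.
  destruct (uGamma_fin_part (iterates_in_uGamma_delta (S k))) as (F & _ & Eta & Nrm).
  set (s := fval (S k) - fstar) in *.
  assert (Hs : 0 < s) by lra.
  assert (HG : Gamma f xstar fstar eta delta (x (S k))).
  { split; [exact Nrm | exists (fval (S k)); repeat split; auto; unfold s in Hs; lra]. }
  pose proof (HKL _ _ HG F) as HKLk. rewrite Hv in HKLk. simpl in HKLk. fold s in HKLk.
  pose proof (desing_deriv_mul_le eta phi dphi Hdesing s Hs Eta).
  assert (Hphi : phi s <= phi (f0 - fstar)).
  { rewrite <- fval_0. apply (desing_monotone eta phi dphi Hdesing); [lra | |].
    - pose proof (decreasing_prop _ 0 (S k) fval_decreasing (Nat.le_0_l _)). unfold s. lra.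
    - rewrite fval_0. exact f0_gap_lt_eta. }
  pose proof (lazy_slope_nonneg E f _ _ Hv).
  assert (s * 1 <= s * (dphi s * v)) by (apply Rmult_le_compat_l; lra).
  assert (dphi s * s * v <= 2 * phi (f0 - fstar) * v) by (apply Rmult_le_compat_r; lra).
  nra.
Qed.

Lemma fval_converges : Un_cv (fun k => fval k) fstar.
Proof.
  apply Un_cv_of_decreasing; [exact fval_decreasing | |].
  { intro k. exact (proj1 (proj2 (uGamma_fin_part (iterates_in_uGamma k)))). }
  intros e He. apply NNPP; intro Hnone.
  assert (Hgap : forall k, e <= fval k - fstar).
  { intro k. apply Rnot_lt_le; intro Hlt. apply Hnone. exists k. lra. }
  assert (HP0 : 0 < phi (f0 - fstar)).
  { pose proof (Hgap 0%nat). rewrite fval_0 in *.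
    apply (desing_pos eta phi dphi Hdesing); [lra|].
    exact f0_gap_lt_eta. }
  apply (slopes_not_eventually_ge (e / (2 * phi (f0 - fstar))) 0); [apply Rdiv_lt_0_compat; lra|].
  intros k _ v Hv. pose proof (slope_ge_of_value_gap e k v (Hgap (S k)) He Hv).
  apply (Rmult_le_reg_l (2 * phi (f0 - fstar))); [lra|].
  replace (2 * phi (f0 - fstar) * (e / (2 * phi (f0 - fstar)))) with e by (field; lra). lra.
Qed.

End KL_descent.

Theorem mainTheorem9 (E : Hilbert) (f : E -> ER) (xstar : E) (fstar : R)
  (eta : ER) (delta rho : R) (phi dphi : R -> R)
  (x : nat -> E) (a b eps : nat -> R) (a_low M Seps : R) :
  proper f -> lsc f -> f xstar = Fin fstar ->
  KL_at f xstar fstar eta delta phi dphi ->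
  (forall k, 0 < a k /\
     ER_le (ER_addR (f (x (S k))) (a k * (Hnorm (Hsub (x (S k)) (x k)))^2)) (f (x k))) ->
  (forall k, 0 < b (S k) /\ 0 <= eps (S k) /\
     ER_le (match lazy_slope f (x (S k)) with
            | Fin v => Fin (b (S k) * v) | PInf => PInf end)
           (Fin (Hnorm (Hsub (x (S k)) (x k)) + eps (S k)))) ->
  0 < a_low -> (forall k, a_low <= a k) ->
  ~ (exists l, infinite_sum (fun i => b (S i)) l) ->
  is_lub (fun r => exists k, (1 <= k)%nat /\ r = / (a k * b k)) M ->
  infinite_sum (fun i => eps (S i)) Seps ->
  delta > rho -> rho > 0 ->
  (forall k, (forall i, (i <= k)%nat -> uGamma f xstar fstar eta rho (x i)) ->
     uGamma f xstar fstar eta delta (x (S k))) ->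
  Gamma f xstar fstar eta rho (x 0%nat) ->
  (exists f0, f (x 0%nat) = Fin f0 /\
     Hnorm (Hsub xstar (x 0%nat)) + 2 * sqrt ((f0 - fstar) / a 0%nat)
       + M * phi (f0 - fstar) + Seps < rho) ->
  (forall k, uGamma f xstar fstar eta rho (x k)) /\
  exists xbar : E,
    Hnorm (Hsub xbar xstar) <= rho /\
    Hcv x xbar /\
    (exists l, infinite_sum (fun i => Hnorm (Hsub (x (S (S i))) (x (S i)))) l) /\
    ER_liminf_zero (fun k => lazy_slope f (x k)) /\
    (exists fk : nat -> R, (forall k, f (x k) = Fin (fk k)) /\
       Un_cv fk fstar /\ ER_le (f xbar) (Fin fstar)).
Proof.
  intros _ Hlsc _ (_ & _ & Hdesing & HKL) H1 H2 _ _ Hb [HM _] Heps Hrho _ HS HG0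
    (f0 & Hf0 & Hbudget).
  assert (Hin : forall k, uGamma f xstar fstar eta rho (x k))
    by (intro k; eapply iterates_in_uGamma; eassumption).
  destruct (Hcomplete E x) as [xbar Hxbar].
  { eapply Hcauchy_of_bounded_steps. intro n. eapply partial_steps_bounded; eassumption. }
  assert (Hval : forall k, f (x k) = Fin (fin_part (f (x k))))
    by (intro k; exact (proj1 (uGamma_fin_part (Hin k)))).
  assert (Hcv_val : Un_cv (fun k => fin_part (f (x k))) fstar)
    by (eapply fval_converges; eassumption).
  split; [exact Hin|]. exists xbar. split; [|split; [exact Hxbar|split; [|split]]].
  - apply (Hcv_norm_sub_le E x xbar xstar rho Hxbar).
    intro k. exact (Rlt_le _ _ (proj2 (proj2 (proj2 (uGamma_fin_part (Hin k)))))).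
  - eapply shifted_steps_summable; eassumption.
  - eapply slope_liminf_zero; eassumption.
  - exists (fun k => fin_part (f (x k))).
    split; [exact Hval | split; [exact Hcv_val|]].
    exact (lsc_le_limit E x f _ xbar fstar Hlsc Hxbar Hval Hcv_val).
Qed.
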